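(* Let $\|\!|\cdot|\!\|$ be any norm on $\ell^1$ equivalent to the usual norm, and let $Y=(\ell^1,\|\!|\cdot|\!\|)$ with closed unit ball $B_Y$. Let $(e_n)_{n\ge1}$ be the canonical basis of $\ell^1$, let $\tau$ be the weak$^\ast$ topology $\sigma(\ell^1,c_0)$, and let $$E=\left\{\tfrac{n}{n+1}\,\tfrac{e_n}{\|\!|e_n|\!\|}: n\in\mathbb{N}\right\}\cup\{0\},\qquad K=\overline{\mathrm{co}}^{\,\tau}(E).$$ Then $K=\overline{\mathrm{co}}(E)$ (norm closure), $K\subseteq B_Y$, $\sup\{\|\!|k|\!\|: k\in K\}=1$, and there is no $k\in K$ with $\|\!|k|\!\|=1$; in particular $K$ is a closed bounded convex subset of $Y$ that is not remotal from $0$.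
   Context: $\overline{\mathrm{co}}^{\,\tau}(E)$ denotes the $\tau$-closed convex hull and $\overline{\mathrm{co}}(E)$ the norm-closed convex hull. A set $C$ is remotal from $z$ if there exists $c_0\in C$ with $\|z-c_0\|=\sup\{\|z-c\|:c\in C\}$. *)

From Stdlib Require Import Reals List.
Open Scope R_scope.

Definition seqR := nat -> R.

Definition l1 (x : seqR) : Prop :=
  exists l, infinite_sum (fun k => Rabs (x k)) l.

Definition c0 (y : seqR) : Prop := Un_cv y 0.

Definition vzero : seqR := fun _ => 0.
Definition vadd (x y : seqR) : seqR := fun k => x k + y k.
Definition vscal (a : R) (x : seqR) : seqR := fun k => a * x k.
Definition vsub (x y : seqR) : seqR := fun k => x k - y k.

(* canonical basis vector (0-indexed: e n has a 1 at coordinate n) *)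
Definition e (n : nat) : seqR := fun k => if Nat.eqb k n then 1 else 0.

Definition equiv_l1_norm (N : seqR -> R) : Prop :=
  (forall x, l1 x -> 0 <= N x) /\
  (forall x, l1 x -> N x = 0 -> x = vzero) /\
  (forall a x, l1 x -> N (vscal a x) = Rabs a * N x) /\
  (forall x y, l1 x -> l1 y -> N (vadd x y) <= N x + N y) /\
  (exists c C, 0 < c /\ 0 < C /\
     forall x l, infinite_sum (fun k => Rabs (x k)) l ->
       c * l <= N x /\ N x <= C * l).

Definition convex (S : seqR -> Prop) : Prop :=
  forall x y t, S x -> S y -> 0 <= t <= 1 ->
    S (vadd (vscal t x) (vscal (1 - t) y)).

Definition wstar_open (U : seqR -> Prop) : Prop :=
  forall x, l1 x -> U x ->
    exists (ys : list seqR) (eps : R), Forall c0 ys /\ 0 < eps /\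
      forall z, l1 z ->
        (forall y, In y ys ->
           exists s, infinite_sum (fun k => (z k - x k) * y k) s /\ Rabs s < eps) ->
        U z.

Definition wstar_closed (S : seqR -> Prop) : Prop :=
  wstar_open (fun x => l1 x /\ ~ S x).

Definition norm_closed (N : seqR -> R) (S : seqR -> Prop) : Prop :=
  forall x, l1 x ->
    (forall eps, 0 < eps -> exists s, S s /\ l1 s /\ N (vsub x s) < eps) -> S x.

Definition wstar_closed_hull (A : seqR -> Prop) : seqR -> Prop :=
  fun x => l1 x /\ forall C, convex C -> wstar_closed C ->
     (forall a, A a -> C a) -> C x.

Definition norm_closed_hull (N : seqR -> R) (A : seqR -> Prop) : seqR -> Prop :=
  fun x => l1 x /\ forall C, convex C -> norm_closed N C ->
     (forall a, A a -> C a) -> C x.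

(* E = { n/(n+1) e_n / |||e_n||| : n >= 1 } u {0}, reindexed from 0 *)
Definition E_set (N : seqR -> R) : seqR -> Prop :=
  fun x => x = vzero \/
    exists n : nat, x = vscal (INR (n + 1) / INR (n + 2) / N (e n)) (e n).

Definition Nbounded (N : seqR -> R) (S : seqR -> Prop) : Prop :=
  exists M, forall x, S x -> N x <= M.

Definition remotal (N : seqR -> R) (C : seqR -> Prop) (z : seqR) : Prop :=
  exists c, C c /\ is_lub (fun r => exists c', C c' /\ r = N (vsub z c')) (N (vsub z c)).

From Stdlib Require Import Reals List Lra Lia Classical FunctionalExtensionality
  PropExtensionality.
Open Scope R_scope.

(* Let a_n = ((n+1)/(n+2)) / |||e_n|||, so that E consists of 0 and the points
   a_n e_n.  The proof identifies both closed convex hulls of E with the explicit set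
     Kset = { x in l^1 : x >= 0 and sum_n x_n / a_n <= 1 }.
   - Kset is convex, contains E, and its complement in l^1 is open for the topology of
     finitely many coordinates; since coordinates are pairings with the basis vectors
     of c_0 and are norm-continuous, Kset is both weak*-closed and norm-closed.  Hence
     both hulls are contained in Kset.
   - Conversely every x in Kset is the l^1-limit of the points (1-q) (x_0,...,x_{m-1},0,...),
     which are convex combinations of 0 and finitely many a_n e_n.  The l^1-norm controls
     |||.||| and the pairings with bounded sequences, so x lies in both hulls.
   - For x in Kset, the triangle inequality gives |||x||| <= sum_n x_n |||e_n||| =
     sum_n (x_n/a_n) (n+1)/(n+2), which is < 1 as soon as x <> 0; while
     |||a_n e_n||| = (n+1)/(n+2) tends to 1.  So the supremum 1 of |||.||| on K is not
     attained, i.e. K is not remotal from 0.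
   The file first develops finite partial sums and nonnegative series, then l^1 and the
   equivalent norm, then the set Kset, and finally the theorem. *)

(* psum f m = f 0 + ... + f (m-1); unlike sum_f_R0 it allows the empty sum. *)
Fixpoint psum (f : nat -> R) (m : nat) : R :=
  match m with O => 0 | S m => psum f m + f m end.

Lemma sum_f_R0_psum f n : sum_f_R0 f n = psum f (S n).
Proof. induction n; simpl in *; [lra|]. rewrite IHn. simpl. lra. Qed.

Lemma psum_ext f g m : (forall k, (k < m)%nat -> f k = g k) -> psum f m = psum g m.
Proof.
  induction m; intros H; simpl; [lra|].
  rewrite IHm, H; auto; intros; apply H; lia.
Qed.

Lemma psum_le f g m : (forall k, (k < m)%nat -> f k <= g k) -> psum f m <= psum g m.
Proof.
  induction m; intros H; simpl; [lra|].
  assert (f m <= g m) by (apply H; lia).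
  assert (psum f m <= psum g m) by (apply IHm; intros; apply H; lia).
  lra.
Qed.

Lemma psum_plus f g m : psum (fun k => f k + g k) m = psum f m + psum g m.
Proof. induction m; simpl; lra. Qed.

Lemma psum_scal c f m : psum (fun k => c * f k) m = c * psum f m.
Proof. induction m; simpl; try rewrite IHm; lra. Qed.

Lemma psum_opp f m : psum (fun k => - f k) m = - psum f m.
Proof. induction m; simpl; try rewrite IHm; lra. Qed.

Lemma psum_zero m : psum (fun _ => 0) m = 0.
Proof. induction m; simpl; lra. Qed.

Lemma psum_nonneg f m : (forall k, 0 <= f k) -> 0 <= psum f m.
Proof. intros H; induction m; simpl; [lra|]. specialize (H m). lra. Qed.

Lemma psum_mono f m n : (forall k, 0 <= f k) -> (m <= n)%nat -> psum f m <= psum f n.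
Proof. intros H Hmn; induction Hmn; [lra|]. simpl. specialize (H m0). lra. Qed.

Lemma psum_term f k m : (forall k, 0 <= f k) -> (k < m)%nat -> f k <= psum f m.
Proof.
  intros H Hk. apply Rle_trans with (psum f (S k)).
  - simpl. pose proof (psum_nonneg f k H). lra.
  - apply psum_mono; auto.
Qed.

Lemma psum_indicator n c m : 0 <= c -> psum (fun k => if Nat.eqb k n then c else 0) m <= c.
Proof.
  intros Hc. induction m; simpl; [lra|].
  destruct (Nat.eqb_spec m n); [subst|lra].
  rewrite (psum_ext _ (fun _ => 0)), psum_zero; [lra|].
  intros k Hk. destruct (Nat.eqb_spec k n); [lia|auto].
Qed.

Lemma series_nonneg_le g l : (forall k, 0 <= g k) -> infinite_sum g l ->
  forall m, psum g m <= l.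
Proof.
  intros Hg Hl m.
  assert (Hgr : Un_growing (sum_f_R0 g)).
  { intros n. rewrite !sum_f_R0_psum. simpl. specialize (Hg (S n)). simpl in Hg. lra. }
  destruct m as [|m].
  - simpl. apply Rle_trans with (sum_f_R0 g 0); [simpl; apply Hg|].
    apply growing_ineq; auto.
  - rewrite <- sum_f_R0_psum. apply growing_ineq; auto.
Qed.

Lemma series_tail g l : infinite_sum g l ->
  forall eta, 0 < eta -> exists m, l - psum g m < eta.
Proof.
  intros Hl eta Heta. destruct (Hl eta Heta) as [n0 Hn0].
  exists (S n0). specialize (Hn0 n0 (le_n _)). unfold R_dist in Hn0.
  rewrite sum_f_R0_psum in Hn0. apply Rabs_def2 in Hn0. lra.
Qed.

Lemma series_nonneg_cv g M : (forall k, 0 <= g k) -> (forall m, psum g m <= M) ->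
  exists l, infinite_sum g l /\ l <= M.
Proof.
  intros Hg HM.
  assert (Hgr : Un_growing (sum_f_R0 g)).
  { intros n. rewrite !sum_f_R0_psum. simpl. specialize (Hg (S n)). simpl in Hg. lra. }
  destruct (growing_cv _ Hgr) as [l Hl].
  { exists M. intros r [i ->]. rewrite sum_f_R0_psum. apply HM. }
  exists l. split; [exact Hl|].
  apply Rnot_lt_le. intros Hlt.
  destruct (series_tail g l Hl (l - M)) as [m Hm]; [lra|].
  specialize (HM m). lra.
Qed.

Lemma series_abs_cv f M : (forall m, psum (fun k => Rabs (f k)) m <= M) ->
  exists s, infinite_sum f s /\ Rabs s <= M.
Proof.
  intros HM.
  destruct (series_nonneg_cv _ M (fun k => Rabs_pos (f k)) HM) as [l [Hl HlM]].
  destruct (cv_cauchy_2 f) as [s Hs].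
  { apply cauchy_abs, CV_Cauchy. exists l. exact Hl. }
  exists s. split; [exact Hs|].
  apply Rle_trans with l; [|exact HlM].
  apply (sum_cv_maj (fun k => Rabs (f k)) (fun k _ => f k) 0); auto.
  intros; lra.
Qed.

Lemma l1_of_bounded x M : (forall m, psum (fun k => Rabs (x k)) m <= M) -> l1 x.
Proof.
  intros H. destruct (series_nonneg_cv _ M (fun k => Rabs_pos (x k)) H) as [l [Hl _]].
  exists l. exact Hl.
Qed.

Lemma l1_bounded x : l1 x -> exists L, infinite_sum (fun k => Rabs (x k)) L /\
  forall m, psum (fun k => Rabs (x k)) m <= L.
Proof.
  intros [L HL]. exists L. split; [exact HL|].
  apply series_nonneg_le; [intros; apply Rabs_pos | exact HL].
Qed.

Lemma l1_dominated x y : l1 y -> (forall k, Rabs (x k) <= Rabs (y k)) -> l1 x.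
Proof.
  intros Hy Hxy. destruct (l1_bounded y Hy) as [L [_ HL]].
  apply (l1_of_bounded _ L). intros m.
  apply Rle_trans with (psum (fun k => Rabs (y k)) m); auto.
  apply psum_le; auto.
Qed.

Lemma l1_vzero : l1 vzero.
Proof.
  apply (l1_of_bounded _ 0). intros m.
  rewrite (psum_ext _ (fun _ => 0)), psum_zero; [lra|].
  intros. unfold vzero. apply Rabs_R0.
Qed.

Lemma l1_e n : l1 (e n).
Proof.
  apply (l1_of_bounded _ 1). intros m.
  rewrite (psum_ext _ (fun k => if Nat.eqb k n then 1 else 0)); [apply psum_indicator; lra|].
  intros k _. unfold e. destruct (Nat.eqb k n); [apply Rabs_R1|apply Rabs_R0].
Qed.

Lemma l1_vadd x y : l1 x -> l1 y -> l1 (vadd x y).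
Proof.
  intros Hx Hy.
  destruct (l1_bounded x Hx) as [Lx [_ HLx]], (l1_bounded y Hy) as [Ly [_ HLy]].
  apply (l1_of_bounded _ (Lx + Ly)). intros m.
  apply Rle_trans with (psum (fun k => Rabs (x k) + Rabs (y k)) m).
  - apply psum_le. intros k _. apply Rabs_triang.
  - rewrite psum_plus. specialize (HLx m). specialize (HLy m). lra.
Qed.

Lemma l1_vscal a x : l1 x -> l1 (vscal a x).
Proof.
  intros Hx. destruct (l1_bounded x Hx) as [L [_ HL]].
  apply (l1_of_bounded _ (Rabs a * L)). intros m.
  rewrite (psum_ext _ (fun k => Rabs a * Rabs (x k))), psum_scal.
  - apply Rmult_le_compat_l; [apply Rabs_pos | apply HL].
  - intros. apply Rabs_mult.
Qed.

Lemma l1_vsub x y : l1 x -> l1 y -> l1 (vsub x y).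
Proof.
  intros Hx Hy. replace (vsub x y) with (vadd x (vscal (-1) y)).
  - apply l1_vadd, l1_vscal; auto.
  - apply functional_extensionality; intros k; unfold vadd, vscal, vsub; lra.
Qed.

Definition trunc (m : nat) (x : seqR) : seqR := fun k => if Nat.ltb k m then x k else 0.
Definition remainder (m : nat) (x : seqR) : seqR := fun k => if Nat.ltb k m then 0 else x k.

Lemma trunc_add_remainder m x : vadd (trunc m x) (remainder m x) = x.
Proof.
  apply functional_extensionality; intros k; unfold vadd, trunc, remainder.
  destruct (Nat.ltb k m); lra.
Qed.

Lemma l1_trunc m x : l1 x -> l1 (trunc m x).
Proof.
  intros Hx. apply (l1_dominated _ x Hx). intros k. unfold trunc.
  destruct (Nat.ltb k m); [lra | rewrite Rabs_R0; apply Rabs_pos].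
Qed.

Lemma l1_remainder m x : l1 x -> l1 (remainder m x).
Proof.
  intros Hx. apply (l1_dominated _ x Hx). intros k. unfold remainder.
  destruct (Nat.ltb k m); [rewrite Rabs_R0; apply Rabs_pos | lra].
Qed.

Lemma remainder_mass x m L : (forall n, psum (fun k => Rabs (x k)) n <= L) ->
  forall n, psum (fun k => Rabs (remainder m x k)) n <= L - psum (fun k => Rabs (x k)) m.
Proof.
  intros HL n.
  assert (Hsplit : forall n, psum (fun k => Rabs (remainder m x k)) n
    = psum (fun k => Rabs (x k)) n - psum (fun k => Rabs (x k)) (Nat.min n m)).
  { clear. induction n; cbn [psum]; [rewrite Nat.min_0_l; simpl; lra|].
    rewrite IHn. unfold remainder.
    destruct (Nat.ltb_spec n m).
    - replace (Nat.min (S n) m) with (S (Nat.min n m)) by lia.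
      replace (Nat.min n m) with n by lia. cbn [psum]. rewrite Rabs_R0. lra.
    - replace (Nat.min (S n) m) with m by lia. replace (Nat.min n m) with m by lia. lra. }
  rewrite Hsplit. pose proof (HL n). pose proof (HL m).
  destruct (Nat.le_ge_cases n m) as [Hnm|Hmn].
  - rewrite Nat.min_l by exact Hnm. lra.
  - rewrite Nat.min_r by exact Hmn. lra.
Qed.

Lemma pairing_e v k : infinite_sum (fun j => v j * e k j) (v k).
Proof.
  assert (Hp : forall n, psum (fun j => v j * e k j) n = if Nat.ltb k n then v k else 0).
  { induction n; simpl; [lra|]. rewrite IHn. unfold e.
    destruct (Nat.ltb_spec k n), (Nat.ltb_spec k (S n)), (Nat.eqb_spec n k);
      subst; try lia; lra. }
  intros eps Heps. exists k. intros n Hn. rewrite sum_f_R0_psum, Hp.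
  destruct (Nat.ltb_spec k (S n)); [|lia]. unfold R_dist. rewrite Rminus_diag, Rabs_R0; lra.
Qed.

(* The basis vectors lie in c_0, so each coordinate is a weak*-continuous functional. *)
Lemma c0_e k : c0 (e k).
Proof.
  intros eps Heps. exists (S k). intros n Hn. unfold e, R_dist.
  destruct (Nat.eqb_spec n k); [lia|]. rewrite Rminus_diag, Rabs_R0; lra.
Qed.

Lemma pairing_small v y B eta : (forall k, Rabs (y k) <= B) ->
  (forall n, psum (fun k => Rabs (v k)) n <= eta) ->
  exists s, infinite_sum (fun k => v k * y k) s /\ Rabs s <= B * eta.
Proof.
  intros HB Hv. apply series_abs_cv. intros m.
  assert (0 <= B) by (specialize (HB 0%nat); pose proof (Rabs_pos (y 0%nat)); lra).
  apply Rle_trans with (psum (fun k => B * Rabs (v k)) m).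
  - apply psum_le. intros k _. rewrite Rabs_mult, Rmult_comm.
    apply Rmult_le_compat_r; [apply Rabs_pos | apply HB].
  - rewrite psum_scal. apply Rmult_le_compat_l; auto.
Qed.

Lemma c0_list_bounded ys : Forall c0 ys ->
  exists B, 0 < B /\ forall y, In y ys -> forall k, Rabs (y k) <= B.
Proof.
  induction 1 as [|y ys Hy _ [B2 [HB2 H2]]].
  - exists 1. split; [lra|]. intros y [].
  - destruct (maj_by_pos y (exist _ 0 Hy)) as [B1 [HB1 H1]].
    exists (Rmax B1 B2). split; [apply Rlt_le_trans with B1; auto; apply Rmax_l|].
    intros z [<-|Hz] k.
    + apply Rle_trans with B1; auto; apply Rmax_l.
    + apply Rle_trans with B2; auto; apply Rmax_r.
Qed.

(* (n+1)/(n+2) = 1 - 1/(n+2): the norms of the points of E approach 1. *)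
Lemma ratio_eq n : INR (n + 1) / INR (n + 2) = 1 - / INR (n + 2).
Proof.
  replace (n + 2)%nat with (S (n + 1)) by lia. rewrite S_INR.
  assert (0 < INR (n + 1)) by (apply lt_0_INR; lia). field. lra.
Qed.

Section EquivalentNorm.

Variable N : seqR -> R.
Hypothesis HN : equiv_l1_norm N.

Lemma norm_upper : exists C, 0 < C /\
  forall v M, (forall m, psum (fun k => Rabs (v k)) m <= M) -> N v <= C * M.
Proof.
  destruct HN as [_ [_ [_ [_ [c [C [Hc [HC Heq]]]]]]]].
  exists C. split; auto. intros v M HM.
  destruct (series_nonneg_cv _ M (fun k => Rabs_pos (v k)) HM) as [l [Hl HlM]].
  apply Rle_trans with (C * l); [apply (Heq v l Hl) | apply Rmult_le_compat_l; lra].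
Qed.

Lemma norm_lower : exists c, 0 < c /\ forall v j, l1 v -> c * Rabs (v j) <= N v.
Proof.
  destruct HN as [_ [_ [_ [_ [c [C [Hc [HC Heq]]]]]]]].
  exists c. split; auto. intros v j [l Hl].
  apply Rle_trans with (c * l); [|apply (Heq v l Hl)].
  apply Rmult_le_compat_l; [lra|].
  apply Rle_trans with (psum (fun k => Rabs (v k)) (S j)).
  - apply (psum_term (fun k => Rabs (v k))); [intros; apply Rabs_pos | lia].
  - apply series_nonneg_le; [intros; apply Rabs_pos | exact Hl].
Qed.

Lemma norm_vzero : N vzero = 0.
Proof.
  destruct HN as [_ [_ [Hs _]]]. replace vzero with (vscal 0 vzero) at 1.
  - rewrite Hs by apply l1_vzero. rewrite Rabs_R0; lra.
  - apply functional_extensionality; intros; unfold vscal, vzero; lra.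
Qed.

Lemma norm_opp c : l1 c -> N (vsub vzero c) = N c.
Proof.
  intros Hc. destruct HN as [_ [_ [Hs _]]].
  replace (vsub vzero c) with (vscal (-1) c).
  - rewrite Hs by auto. rewrite Rabs_left by lra. lra.
  - apply functional_extensionality; intros k; unfold vsub, vscal, vzero; lra.
Qed.

Lemma not_remotal_zero S : (forall k, S k -> l1 k) -> (forall k, S k -> N k < 1) ->
  (forall b, (forall k, S k -> N k <= b) -> 1 <= b) -> ~ remotal N S vzero.
Proof.
  intros Hl1 Hlt Hsup [c [Hc [Hub _]]].
  rewrite norm_opp in Hub by auto.
  assert (1 <= N c).
  { apply Hsup. intros k Hk. rewrite <- norm_opp by auto. apply Hub. eauto. }
  specialize (Hlt c Hc). lra.
Qed.

Lemma norm_e_pos n : 0 < N (e n).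
Proof.
  destruct HN as [Hp [Hd _]].
  destruct (Rle_lt_or_eq_dec _ _ (Hp _ (l1_e n))) as [|H0]; auto.
  exfalso. symmetry in H0. apply Hd in H0; [|apply l1_e].
  assert (H1 : e n n = vzero n) by (rewrite H0; auto).
  unfold e, vzero in H1. rewrite Nat.eqb_refl in H1. lra.
Qed.

Lemma norm_trunc_le x m : l1 x -> N (trunc m x) <= psum (fun k => Rabs (x k) * N (e k)) m.
Proof.
  intros Hx. pose proof HN as [_ [_ [Hs [Ht _]]]]. induction m as [|m IH].
  - replace (trunc 0 x) with vzero; [rewrite norm_vzero; simpl; lra|].
    apply functional_extensionality; intros k; unfold trunc, vzero.
    destruct (Nat.ltb_spec k 0); [lia|lra].
  - replace (trunc (S m) x) with (vadd (trunc m x) (vscal (x m) (e m))).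
    + cbn [psum]. eapply Rle_trans; [apply Ht; [apply l1_trunc | apply l1_vscal, l1_e]; auto|].
      rewrite Hs by apply l1_e. lra.
    + apply functional_extensionality; intros k; unfold vadd, trunc, vscal, e.
      destruct (Nat.ltb_spec k m), (Nat.ltb_spec k (S m)), (Nat.eqb_spec k m);
        subst; try lia; lra.
Qed.

End EquivalentNorm.

Section TheSetK.

Variable N : seqR -> R.
Hypothesis HN : equiv_l1_norm N.

Definition weight (n : nat) : R := INR (n + 1) / INR (n + 2) / N (e n).

Definition corner (n : nat) : seqR := vscal (weight n) (e n).

(* The explicit description of K: nonnegative l^1 sequences with sum_n x_n / a_n <= 1. *)
Definition Kset (x : seqR) : Prop :=
  l1 x /\ (forall n, 0 <= x n) /\ (forall m, psum (fun k => x k / weight k) m <= 1).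

Lemma weight_pos n : 0 < weight n.
Proof.
  unfold weight. pose proof (norm_e_pos N HN n).
  assert (0 < INR (n + 1)) by (apply lt_0_INR; lia).
  assert (0 < INR (n + 2)) by (apply lt_0_INR; lia).
  repeat apply Rdiv_lt_0_compat; auto.
Qed.

Lemma div_weight_nonneg x k : 0 <= x -> 0 <= x / weight k.
Proof. intros Hx. pose proof (weight_pos k). unfold Rdiv. apply Rmult_le_pos; [lra|].
  left. apply Rinv_0_lt_compat; lra. Qed.

Lemma norm_corner n : N (corner n) = INR (n + 1) / INR (n + 2).
Proof.
  pose proof (weight_pos n). pose proof (norm_e_pos N HN n).
  destruct HN as [_ [_ [Hs _]]]. unfold corner. rewrite Hs by apply l1_e.
  rewrite Rabs_pos_eq by lra. unfold weight. field.
  repeat split; try lra; apply not_0_INR; lia.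
Qed.

Lemma E_set_corner n : E_set N (corner n).
Proof. right. exists n. reflexivity. Qed.

Lemma E_in_Kset x : E_set N x -> Kset x.
Proof.
  intros [->|[n ->]].
  - split; [apply l1_vzero|]. split; [intros; unfold vzero; lra|].
    intros m. rewrite (psum_ext _ (fun _ => 0)), psum_zero; [lra|].
    intros k _. unfold vzero, Rdiv. lra.
  - fold (weight n). fold (corner n). pose proof (weight_pos n).
    split; [apply l1_vscal, l1_e|]. split.
    + intros k. unfold corner, vscal, e. destruct (Nat.eqb k n); lra.
    + intros m. rewrite (psum_ext _ (fun k => if Nat.eqb k n then 1 else 0)).
      * apply psum_indicator; lra.
      * intros k _. unfold corner, vscal, e. pose proof (weight_pos k).
        destruct (Nat.eqb_spec k n); [subst; field|unfold Rdiv; ring]; lra.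
Qed.

Lemma Kset_convex : convex Kset.
Proof.
  intros x y t [Hx [Hx0 Hx1]] [Hy [Hy0 Hy1]] Ht.
  split; [apply l1_vadd; apply l1_vscal; auto|]. split.
  - intros n. unfold vadd, vscal. specialize (Hx0 n). specialize (Hy0 n). nra.
  - intros m.
    rewrite (psum_ext _ (fun k => t * (x k / weight k) + (1 - t) * (y k / weight k))).
    + rewrite psum_plus, !psum_scal. specialize (Hx1 m). specialize (Hy1 m). nra.
    + intros k _. unfold vadd, vscal. pose proof (weight_pos k). field. lra.
Qed.

(* The complement of Kset in l^1 is open for the topology of finitely many coordinates:
   either some coordinate is negative, or a finite weighted partial sum exceeds 1. *)
Lemma Kset_complement_open x : l1 x -> ~ Kset x ->
  exists m d, 0 < d /\
    forall z, (forall k, (k < m)%nat -> Rabs (z k - x k) < d) -> ~ Kset z.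
Proof.
  intros Hx HK.
  destruct (classic (forall n, 0 <= x n)) as [Hpos|Hneg].
  - assert (exists m, 1 < psum (fun k => x k / weight k) m) as [m Hm].
    { apply NNPP. intros Hno. apply HK. split; auto. split; auto. intros m.
      apply Rnot_lt_le. intros Hlt. apply Hno. eauto. }
    set (W := psum (fun k => / weight k) m).
    assert (HW : 0 <= W).
    { apply psum_nonneg. intros k. left. apply Rinv_0_lt_compat, weight_pos. }
    set (d := (psum (fun k => x k / weight k) m - 1) / (W + 1)).
    assert (Hd : 0 < d) by (unfold d; apply Rdiv_lt_0_compat; lra).
    exists m, d. split; auto. intros z Hz [_ [_ Hz1]]. specialize (Hz1 m).
    assert (Hlow : psum (fun k => x k / weight k) m - d * W
                   <= psum (fun k => z k / weight k) m).
    { unfold W, Rminus. rewrite <- psum_scal, <- psum_opp, <- psum_plus. apply psum_le.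
      intros k Hk. specialize (Hz k Hk). apply Rabs_def2 in Hz.
      pose proof (Rinv_0_lt_compat _ (weight_pos k)). unfold Rdiv. nra. }
    assert (d * W < psum (fun k => x k / weight k) m - 1).
    { apply Rlt_le_trans with (d * (W + 1)).
      - apply Rmult_lt_compat_l; lra.
      - right. unfold d. field. lra. }
    lra.
  - apply not_all_ex_not in Hneg. destruct Hneg as [n Hn]. apply Rnot_le_lt in Hn.
    exists (S n), (- x n). split; [lra|]. intros z Hz [_ [Hz0 _]].
    specialize (Hz n (Nat.lt_succ_diag_r n)). apply Rabs_def2 in Hz. specialize (Hz0 n). lra.
Qed.

(* Coordinate neighbourhoods are weak*-neighbourhoods, so Kset is weak*-closed. *)
Lemma Kset_wstar_closed : wstar_closed Kset.
Proof.
  intros x Hx [_ HK]. destruct (Kset_complement_open x Hx HK) as [m [d [Hd Hz]]].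
  exists (map e (seq 0 m)), d. split; [|split; auto].
  - apply Forall_forall. intros y Hy. apply in_map_iff in Hy.
    destruct Hy as [k [<- _]]. apply c0_e.
  - intros z Hzl Hys. split; auto. apply Hz. intros k Hk.
    destruct (Hys (e k)) as [s [Hs Hs']]; [apply in_map, in_seq; lia|].
    rewrite (uniqueness_sum _ _ _ Hs (pairing_e (fun j => z j - x j) k)) in Hs'. exact Hs'.
Qed.

(* Coordinates are norm-continuous, so Kset is norm-closed. *)
Lemma Kset_norm_closed : norm_closed N Kset.
Proof.
  intros x Hx Happ. apply NNPP. intros HK.
  destruct (Kset_complement_open x Hx HK) as [m [d [Hd Hz]]].
  destruct (norm_lower N HN) as [c [Hc Hlow]].
  destruct (Happ (c * d)) as [s [Hs [Hsl Hxs]]]; [nra|].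
  apply (Hz s); auto. intros k _.
  replace (s k - x k) with (- vsub x s k) by (unfold vsub; ring). rewrite Rabs_Ropp.
  pose proof (Hlow (vsub x s) k (l1_vsub x s Hx Hsl)).
  apply Rmult_lt_reg_l with c; lra.
Qed.

Definition conv_E (z : seqR) : Prop :=
  forall C, convex C -> (forall a, E_set N a -> C a) -> C z.

(* A scaled truncation lam (x_0,...,x_{m-1},0,...) of x in Kset lies in the convex hull of E
   when lam sum_{k<m} x_k/a_k < 1: peel off the last coordinate as a multiple of a_m e_m. *)
Lemma trunc_in_conv_E x : Kset x ->
  forall m lam, 0 <= lam -> lam * psum (fun k => x k / weight k) m < 1 ->
  conv_E (vscal lam (trunc m x)).
Proof.
  intros [Hx [Hx0 Hx1]] m. induction m as [|m IH]; intros lam Hl Hlm C HC HE.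
  - replace (vscal lam (trunc 0 x)) with vzero; [apply HE; left; auto|].
    apply functional_extensionality; intros k; unfold vscal, trunc, vzero.
    destruct (Nat.ltb_spec k 0); [lia|lra].
  - cbn [psum] in Hlm. pose proof (weight_pos m) as Ha.
    set (b := lam * (x m / weight m)).
    assert (Hbw : b * weight m = lam * x m) by (unfold b; field; lra).
    assert (Hb : 0 <= b) by (apply Rmult_le_pos; auto; apply div_weight_nonneg; auto).
    assert (0 <= lam * psum (fun k => x k / weight k) m).
    { apply Rmult_le_pos; auto. apply psum_nonneg. intros; apply div_weight_nonneg; auto. }
    assert (Hb1 : lam * psum (fun k => x k / weight k) m + b < 1)
      by (unfold b; rewrite <- Rmult_plus_distr_l; exact Hlm).
    clearbody b.
    assert (Hrest : C (vscal (lam / (1 - b)) (trunc m x))).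
    { apply IH; auto.
      - apply Rmult_le_pos; [lra | left; apply Rinv_0_lt_compat; lra].
      - apply Rmult_lt_reg_l with (1 - b); [lra|].
        replace ((1 - b) * (lam / (1 - b) * psum (fun k => x k / weight k) m))
          with (lam * psum (fun k => x k / weight k) m) by (field; lra). lra. }
    replace (vscal lam (trunc (S m) x))
      with (vadd (vscal b (corner m)) (vscal (1 - b) (vscal (lam / (1 - b)) (trunc m x)))).
    + apply HC; [apply HE, E_set_corner | exact Hrest | lra].
    + apply functional_extensionality; intros k. unfold vadd, corner, vscal, trunc, e.
      destruct (Nat.ltb_spec k m), (Nat.ltb_spec k (S m)), (Nat.eqb_spec k m);
        subst; try lia; try rewrite <- Hbw; field; lra.
Qed.

Lemma scaled_trunc_dist x m q L : 0 <= q ->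
  (forall n, psum (fun k => Rabs (x k)) n <= L) ->
  forall n, psum (fun k => Rabs (vscal (1 - q) (trunc m x) k - x k)) n
            <= q * L + (L - psum (fun k => Rabs (x k)) m).
Proof.
  intros Hq HL n.
  apply Rle_trans with (psum (fun k => q * Rabs (x k) + Rabs (remainder m x k)) n).
  - apply psum_le. intros k _. unfold vscal, trunc, remainder.
    pose proof (Rabs_pos (x k)). destruct (Nat.ltb k m).
    + replace ((1 - q) * x k - x k) with (- q * x k) by ring.
      rewrite Rabs_mult, Rabs_Ropp, (Rabs_pos_eq q), Rabs_R0 by lra. lra.
    + replace ((1 - q) * 0 - x k) with (- x k) by ring. rewrite Rabs_Ropp. nra.
  - rewrite psum_plus, psum_scal. pose proof (remainder_mass x m L HL n).
    pose proof (HL n). nra.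
Qed.

Lemma Kset_approx x : Kset x -> forall eta, 0 < eta ->
  exists z, conv_E z /\ l1 z /\ forall n, psum (fun k => Rabs (z k - x k)) n <= eta.
Proof.
  intros HK eta Heta. pose proof HK as [Hx [_ Hx1]].
  destruct (l1_bounded x Hx) as [L [HLs HL]].
  destruct (series_tail _ L HLs (eta / 2)) as [m Hm]; [lra|].
  assert (HL0 : 0 <= L) by (specialize (HL 0%nat); simpl in HL; lra).
  set (q := eta / (2 * (L + 1) + eta)).
  assert (Hq0 : 0 < q) by (unfold q; apply Rdiv_lt_0_compat; lra).
  assert (Hq1 : q < 1) by (unfold q; apply Rmult_lt_reg_r with (2 * (L + 1) + eta);
    [lra | field_simplify; lra]).
  assert (HqL : q * L <= eta / 2).
  { apply Rle_trans with (q * (L + 1)); [nra|]. unfold q.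
    apply Rmult_le_reg_r with (2 * (L + 1) + eta); [lra|]. field_simplify; nra. }
  exists (vscal (1 - q) (trunc m x)). split; [|split].
  - apply (trunc_in_conv_E x HK); [lra|]. specialize (Hx1 m). nra.
  - apply l1_vscal, l1_trunc, Hx.
  - intros n. pose proof (scaled_trunc_dist x m q L (Rlt_le _ _ Hq0) HL n). lra.
Qed.

(* Kset is contained in the weak*-closed convex hull: a weak*-neighbourhood of x is
   determined by finitely many bounded sequences, and meets the convex hull of E. *)
Lemma Kset_in_wstar_hull x : Kset x -> wstar_closed_hull (E_set N) x.
Proof.
  intros HK. split; [apply HK|]. intros C HC Hwc HE. apply NNPP; intros Hn.
  destruct (Hwc x (proj1 HK) (conj (proj1 HK) Hn)) as [ys [eps [Hys [Heps Hnbhd]]]].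
  destruct (c0_list_bounded ys Hys) as [B [HB HBy]].
  destruct (Kset_approx x HK (eps / (2 * B))) as [z [HzE [Hzl Hz]]];
    [apply Rdiv_lt_0_compat; lra|].
  apply (Hnbhd z Hzl); [|apply HzE; auto]. intros y Hy.
  destruct (pairing_small (fun k => z k - x k) y B (eps / (2 * B)) (HBy y Hy) Hz)
    as [s [Hs Hs']].
  exists s. split; auto.
  replace (B * (eps / (2 * B))) with (eps / 2) in Hs' by (field; lra). lra.
Qed.

(* Kset is contained in the norm-closed convex hull, since |||.||| <= C ||.||_1. *)
Lemma Kset_in_norm_hull x : Kset x -> norm_closed_hull N (E_set N) x.
Proof.
  intros HK. split; [apply HK|]. intros C HC Hnc HE. apply Hnc; [apply HK|].
  intros eps Heps. destruct (norm_upper N HN) as [Cn [HCn Hup]].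
  destruct (Kset_approx x HK (eps / (2 * Cn))) as [z [HzE [Hzl Hz]]];
    [apply Rdiv_lt_0_compat; lra|].
  exists z. split; [apply HzE; auto|]. split; auto.
  apply Rle_lt_trans with (Cn * (eps / (2 * Cn))).
  - apply Hup. intros m. rewrite (psum_ext _ (fun k => Rabs (z k - x k))); [apply Hz|].
    intros k _. unfold vsub. apply Rabs_minus_sym.
  - replace (Cn * (eps / (2 * Cn))) with (eps / 2) by (field; lra). lra.
Qed.

Lemma wstar_hull_in_Kset x : wstar_closed_hull (E_set N) x -> Kset x.
Proof. intros [_ H]. apply H; [apply Kset_convex | apply Kset_wstar_closed | apply E_in_Kset]. Qed.

Lemma norm_hull_in_Kset x : norm_closed_hull N (E_set N) x -> Kset x.
Proof. intros [_ H]. apply H; [apply Kset_convex | apply Kset_norm_closed | apply E_in_Kset]. Qed.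

(* On a truncation, |||x||| <= sum_{k<m} x_k |||e_k||| = sum_{k<m} (x_k/a_k)(1 - 1/(k+2)),
   which falls short of 1 by at least (x_j/a_j)/(j+2) for each j < m. *)
Lemma norm_trunc_gap x j m : Kset x -> (j < m)%nat ->
  N (trunc m x) <= 1 - x j / weight j / INR (j + 2).
Proof.
  intros [Hx [Hx0 Hx1]] Hjm.
  set (gap := fun k => x k / weight k / INR (k + 2)).
  assert (Hgap : forall k, 0 <= gap k).
  { intros k. unfold gap, Rdiv. apply Rmult_le_pos; [apply div_weight_nonneg; auto|].
    left. apply Rinv_0_lt_compat, lt_0_INR. lia. }
  apply Rle_trans with (psum (fun k => Rabs (x k) * N (e k)) m); [apply norm_trunc_le; auto|].
  rewrite (psum_ext _ (fun k => x k / weight k + - gap k)).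
  - rewrite psum_plus, psum_opp. specialize (Hx1 m).
    pose proof (psum_term gap j m Hgap Hjm). unfold gap in *. lra.
  - intros k _. rewrite Rabs_pos_eq by auto. unfold gap.
    pose proof (weight_pos k). pose proof (norm_e_pos N HN k).
    replace (x k * N (e k)) with (x k / weight k * (INR (k + 1) / INR (k + 2))).
    + rewrite ratio_eq. field. split; [lra | apply not_0_INR; lia].
    + unfold weight. field. repeat split; try lra; apply not_0_INR; lia.
Qed.

(* Every point of Kset has norm < 1: a positive coordinate creates a gap on long
   truncations, and the remaining tail has small norm. *)
Lemma Kset_norm_lt_1 x : Kset x -> N x < 1.
Proof.
  intros HK. pose proof HK as [Hx [Hx0 _]].
  destruct (classic (exists j, x j <> 0)) as [[j Hj]|Hall].
  2:{ replace x with vzero; [rewrite norm_vzero; auto; lra|].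
      apply functional_extensionality; intros k. unfold vzero.
      apply NNPP. intros Hk. apply Hall. exists k. auto. }
  set (g := x j / weight j / INR (j + 2)).
  assert (Hg : 0 < g).
  { unfold g. pose proof (weight_pos j).
    destruct (Rle_lt_or_eq_dec 0 (x j) (Hx0 j)) as [Hxj|Hxj]; [|congruence].
    assert (0 < INR (j + 2)) by (apply lt_0_INR; lia).
    apply Rdiv_lt_0_compat; [apply Rdiv_lt_0_compat|]; lra. }
  destruct (norm_upper N HN) as [Cn [HCn Hup]].
  destruct (l1_bounded x Hx) as [L [HLs HL]].
  destruct (series_tail _ L HLs (g / (2 * Cn))) as [m0 Hm0]; [apply Rdiv_lt_0_compat; lra|].
  set (m := Nat.max m0 (S j)).
  assert (Hmono : psum (fun k => Rabs (x k)) m0 <= psum (fun k => Rabs (x k)) m)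
    by (apply psum_mono; [intros; apply Rabs_pos | lia]).
  assert (Hrem : N (remainder m x) <= Cn * (L - psum (fun k => Rabs (x k)) m))
    by (apply Hup, remainder_mass, HL).
  assert (Hsmall : Cn * (L - psum (fun k => Rabs (x k)) m) < g / 2).
  { apply Rle_lt_trans with (Cn * (L - psum (fun k => Rabs (x k)) m0)); [nra|].
    replace (g / 2) with (Cn * (g / (2 * Cn))) by (field; lra).
    apply Rmult_lt_compat_l; auto. }
  pose proof (norm_trunc_gap x j m HK ltac:(lia)) as Hgap. fold g in Hgap.
  rewrite <- (trunc_add_remainder m x).
  destruct HN as [_ [_ [_ [Htri _]]]].
  pose proof (Htri _ _ (l1_trunc m x Hx) (l1_remainder m x Hx)). lra.
Qed.

Lemma corners_norm_sup b : (forall n, N (corner n) <= b) -> 1 <= b.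
Proof.
  intros H. apply Rnot_lt_le. intros Hb.
  destruct (INR_unbounded (/ (1 - b))) as [n Hn].
  specialize (H n). rewrite norm_corner, ratio_eq in H.
  assert (0 < / (1 - b)) by (apply Rinv_0_lt_compat; lra).
  assert (INR n < INR (n + 2)) by (apply lt_INR; lia).
  assert (/ INR (n + 2) < 1 - b).
  { rewrite <- (Rinv_inv (1 - b)). apply Rinv_lt_contravar; [nra | lra]. }
  lra.
Qed.

Lemma Kset_corner n : Kset (corner n).
Proof. apply E_in_Kset, E_set_corner. Qed.

End TheSetK.

Theorem mainTheorem7 (N : seqR -> R) (HN : equiv_l1_norm N) :
  let K := wstar_closed_hull (E_set N) in
  (forall x, K x <-> norm_closed_hull N (E_set N) x) /\
  (forall k, K k -> N k <= 1) /\
  is_lub (fun r => exists k, K k /\ r = N k) 1 /\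
  ~ (exists k, K k /\ N k = 1) /\
  (convex K /\ norm_closed N K /\ Nbounded N K /\ ~ remotal N K vzero).
Proof.
  intros K.
  assert (HK : K = Kset N).
  { apply functional_extensionality; intros x. apply propositional_extensionality.
    split; [apply wstar_hull_in_Kset | apply Kset_in_wstar_hull]; auto. }
  rewrite HK. clear K HK.
  pose proof (Kset_norm_lt_1 N HN) as Hlt.
  assert (Hsup : forall b, (forall k, Kset N k -> N k <= b) -> 1 <= b).
  { intros b Hb. apply (corners_norm_sup N HN). intros n. apply Hb, Kset_corner, HN. }
  split; [|split; [|split; [|split; [|split; [|split; [|split]]]]]].
  - intros x. split; [apply Kset_in_norm_hull | apply norm_hull_in_Kset]; auto.
  - intros k Hk. left. auto.
  - split; [intros r [k [Hk ->]]; left; auto|].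
    intros b Hb. apply Hsup. intros k Hk. apply Hb. eauto.
  - intros [k [Hk Hk1]]. specialize (Hlt k Hk). lra.
  - apply Kset_convex, HN.
  - apply Kset_norm_closed, HN.
  - exists 1. intros x Hx. left. auto.
  - apply not_remotal_zero; auto. intros k Hk. apply Hk.
Qed.
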